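(* Let $X$ be a separable Banach space and $G$ be a topological group acting continuously on $X$ by linear isometries. There exists an equivalent $G$-invariant strictly convex norm on $X$ if and only if there are a countable dense sequence $(x_n)_{n\in\mathbb{N}}\subseteq X$, a constant $C>0$, and linear $G$-equivariant maps $T_n:X\to Z_n$, $n\in\mathbb{N}$, such that for each $n$: $Z_n$ is a strictly convex Banach space equipped with an action of $G$ by linear isometries, $\|T_n\|\leq 1$, and $\|T_n(x_n)\|\geq C\|x_n\|$.
   Context: A norm $\|\cdot\|'$ on $X$ is $G$-invariant if $\|g\cdot x\|'=\|x\|'$ for all $g\in G$, $x\in X$; a linear map $T$ is $G$-equivariant if $T(g\cdot x)=g\cdot T(x)$. A norm is strictly convex if for every $x\neq y$ with $\|x\|=\|y\|$ one has $\|\frac{x+y}{2}\|<\|x\|$. *)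

From HB Require Import structures.
From mathcomp Require Import all_boot all_order all_algebra.
From mathcomp Require Import all_classical all_reals all_analysis.
Set Implicit Arguments. Unset Strict Implicit. Unset Printing Implicit Defensive.
Import Order.TTheory GRing.Theory Num.Theory.
Import numFieldNormedType.Exports.
Local Open Scope classical_set_scope.
Local Open Scope ring_scope.

Definition is_topological_group (G : topologicalType)
  (mul : G -> G -> G) (one : G) (inv : G -> G) : Prop :=
  [/\ (forall a b c, mul a (mul b c) = mul (mul a b) c),
      (forall a, mul one a = a /\ mul a one = a),
      (forall a, mul (inv a) a = one /\ mul a (inv a) = one),
      continuous (fun p : G * G => mul p.1 p.2) &
      continuous inv].

Definition is_linear_isometric_action (R : realType) (G : Type)
  (mul : G -> G -> G) (one : G) (V : normedModType R) (act : G -> V -> V) : Prop :=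
  [/\ (forall x, act one x = x),
      (forall g h x, act (mul g h) x = act g (act h x)),
      (forall g (a : R) x y, act g (a *: x + y) = a *: act g x + act g y) &
      (forall g x, `|act g x| = `|x|)].

Definition continuous_action (R : realType) (G : topologicalType)
  (V : normedModType R) (act : G -> V -> V) : Prop :=
  continuous (fun p : G * V => act p.1 p.2).

Definition separable (T : topologicalType) : Prop :=
  exists u : nat -> T, dense (range u).

Definition is_norm (R : realType) (V : normedModType R) (N : V -> R) : Prop :=
  [/\ (forall x, N x = 0 -> x = 0),
      (forall (a : R) x, N (a *: x) = `|a| * N x) &
      (forall x y, N (x + y) <= N x + N y)].

Definition equivalent_norm (R : realType) (V : normedModType R) (N : V -> R) : Prop :=
  exists a b : R, [/\ 0 < a, 0 < b &
    forall x, a * `|x| <= N x /\ N x <= b * `|x|].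

Definition strictly_convex_fun (R : realType) (V : normedModType R) (N : V -> R) : Prop :=
  forall x y : V, x <> y -> N x = N y -> N (2^-1 *: (x + y)) < N x.

Definition strictly_convex_space (R : realType) (V : normedModType R) : Prop :=
  strictly_convex_fun (fun x : V => `|x|).

Definition G_invariant (G : Type) (V : Type) (R : realType)
  (act : G -> V -> V) (N : V -> R) : Prop :=
  forall g x, N (act g x) = N x.

From HB Require Import structures.
From mathcomp Require Import all_boot all_order all_algebra.
From mathcomp Require Import all_classical all_reals all_analysis.
From mathcomp Require Import ring lra.
Import Order.TTheory GRing.Theory Num.Theory.
Import numFieldNormedType.Exports.
Local Open Scope classical_set_scope.
Local Open Scope ring_scope.

(* If N is a G-invariant strictly convex equivalent norm, X renormed by N is a
   single strictly convex space Z_n = (X, N), and T_n is the identity scaled by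
   1/b, where N <= b |.|.  Conversely, put
     |||v|||^2 = |v|^2 + sum_n 2^-(n+1) |T_n v|^2.
   This is an equivalent G-invariant norm.  If u <> v, density of (x_n) and the
   lower bounds |T_n x_n| >= C |x_n| give some k with T_k u <> T_k v; strict
   convexity of Z_k then makes the k-th summand, hence |||.|||^2, strictly
   smaller at the midpoint than the mean of its values at u and v. *)

Set Implicit Arguments. Unset Strict Implicit.

Section WeightedSeries.
Variable R : realType.
Implicit Types (f g : nat -> R) (c K : R).

Definition nonneg_bounded f : Prop :=
  (forall i, 0 <= f i) /\ exists K, forall i, f i <= K.

Local Notation wseries f := (\sum_(i <oo) ((f i) / (2 ^ i.+1)%:R)%:E)%E.

(* Only meaningful when [nonneg_bounded f]: [fine] sends a divergent series to 0. *)
Definition wsum f : R := fine (wseries f).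

Let weighted_ge0 f : (forall i, 0 <= f i) ->
  forall i, (0 <= ((f i / (2 ^ i.+1)%:R)%:E : \bar R))%E.
Proof. by move=> f0 i; rewrite lee_fin divr_ge0 // ltW. Qed.

Lemma wseries_le f K : (forall i, 0 <= f i) -> (forall i, f i <= K) ->
  (wseries f <= K%:E)%E.
Proof.
move=> f0 fK; have K0 : 0 <= K := le_trans (f0 0%N) (fK 0%N).
apply: le_trans (epsilon_trick0 xpredT K0).
apply: lee_nneseries => [i _ _|i _]; first exact: weighted_ge0.
by rewrite lee_fin ler_pM2r ?invr_gt0.
Qed.

Lemma wsumE f : nonneg_bounded f -> wseries f = (wsum f)%:E.
Proof.
move=> [f0 [K fK]]; rewrite /wsum fineK // ge0_fin_numE.
  exact: le_lt_trans (wseries_le f0 fK) (ltry K).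
by apply: nneseries_ge0 => i _ _; exact: weighted_ge0.
Qed.

Lemma wsum_ge0 f : nonneg_bounded f -> 0 <= wsum f.
Proof.
move=> fb; rewrite -lee_fin -wsumE //.
by apply: nneseries_ge0 => i _ _; apply: weighted_ge0; case: fb.
Qed.

Lemma wsum_le_bound f K : (forall i, 0 <= f i <= K) -> wsum f <= K.
Proof.
move=> fK; have [f0 {}fK] : (forall i, 0 <= f i) /\ (forall i, f i <= K).
  by split=> i; case/andP: (fK i).
by rewrite -lee_fin -wsumE; [exact: wseries_le | split=> //; exists K].
Qed.

Lemma wsum_ge_term f k : nonneg_bounded f -> f k / (2 ^ k.+1)%:R <= wsum f.
Proof.
move=> fb; have f0 := weighted_ge0 fb.1.
rewrite -lee_fin -wsumE //; apply: le_trans (nneseries_lim_ge k.+1 _) => //.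
by rewrite big_nat_recr //= leeDr // sume_ge0.
Qed.

Lemma nonneg_boundedD f g : nonneg_bounded f -> nonneg_bounded g ->
  nonneg_bounded (fun i => f i + g i).
Proof.
move=> [f0 [K fK]] [g0 [L gL]]; split=> [i|]; first by rewrite addr_ge0.
by exists (K + L) => i; rewrite lerD.
Qed.

Lemma nonneg_boundedZ c f : 0 <= c -> nonneg_bounded f ->
  nonneg_bounded (fun i => c * f i).
Proof.
move=> c0 [f0 [K fK]]; split=> [i|]; first by rewrite mulr_ge0.
by exists (c * K) => i; rewrite ler_wpM2l.
Qed.

Lemma nonneg_bounded_le f g : (forall i, 0 <= f i <= g i) -> nonneg_bounded g ->
  nonneg_bounded f.
Proof.
move=> fg [_ [K gK]]; split=> [i|]; first by case/andP: (fg i).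
by exists K => i; case/andP: (fg i) => _ /le_trans; apply.
Qed.

Lemma wsumD f g : nonneg_bounded f -> nonneg_bounded g ->
  wsum (fun i => f i + g i) = wsum f + wsum g.
Proof.
move=> fb gb; apply/EFin_inj; rewrite -wsumE; last exact: nonneg_boundedD.
rewrite EFinD -!wsumE // -nneseriesD => [|i _ _|i _ _]; last 2 first.
- exact: weighted_ge0 fb.1 i.
- exact: weighted_ge0 gb.1 i.
by apply: eq_eseriesr => i _; rewrite -EFinD mulrDl.
Qed.

Lemma wsumZ c f : 0 <= c -> nonneg_bounded f ->
  wsum (fun i => c * f i) = c * wsum f.
Proof.
move=> c0 fb; apply/EFin_inj; rewrite -wsumE; last exact: nonneg_boundedZ.
rewrite EFinM -wsumE //.
rewrite -nneseriesZl => [|i _]; last exact: weighted_ge0 fb.1 i.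
by apply: eq_eseriesr => i _; rewrite -EFinM mulrA.
Qed.

Lemma ler_wsum f g : (forall i, 0 <= f i <= g i) -> nonneg_bounded g ->
  wsum f <= wsum g.
Proof.
move=> fg gb; have fb := nonneg_bounded_le fg gb.
rewrite -lee_fin -!wsumE //; apply: lee_nneseries => [i _ _|i _].
  exact: weighted_ge0 fb.1 i.
by case/andP: (fg i) => _ le_fg; rewrite lee_fin ler_pM2r ?invr_gt0.
Qed.

Lemma ltr_wsum f g k : (forall i, 0 <= f i <= g i) -> f k < g k ->
  nonneg_bounded g -> wsum f < wsum g.
Proof.
move=> fg lt_fgk gb; have fb := nonneg_bounded_le fg gb.
have dfg : nonneg_bounded (fun i => g i - f i).
  apply: nonneg_bounded_le gb => i; case/andP: (fg i) => f0 le_fg.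
  by rewrite subr_ge0 le_fg gerBl.
have -> : wsum g = wsum f + wsum (fun i => g i - f i).
  by rewrite -wsumD //; congr wsum; apply/funext => i; rewrite addrC subrK.
rewrite ltrDl; apply: lt_le_trans (wsum_ge_term k dfg).
by rewrite divr_gt0 // subr_gt0.
Qed.

End WeightedSeries.

Section SquareInequalities.
Variable R : realFieldType.
Implicit Types a b c t : R.

Lemma sqrrD_le_weighted a b t : 0 < t ->
  (a + b) ^+ 2 <= (1 + t) * a ^+ 2 + (1 + t^-1) * b ^+ 2.
Proof.
move=> t0; rewrite -subr_ge0.
have -> : (1 + t) * a ^+ 2 + (1 + t^-1) * b ^+ 2 - (a + b) ^+ 2 = (t * a - b) ^+ 2 / t.
  by field; rewrite gt_eqF.
by rewrite divr_ge0 ?sqr_ge0 ?ltW.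
Qed.

Lemma sqr_mean_le a b : (2^-1 * (a + b)) ^+ 2 <= 2^-1 * (a ^+ 2 + b ^+ 2).
Proof.
rewrite -subr_ge0.
have -> : 2^-1 * (a ^+ 2 + b ^+ 2) - (2^-1 * (a + b)) ^+ 2 = (2^-1 * (a - b)) ^+ 2.
  by field.
exact: sqr_ge0.
Qed.

Lemma sqr_mean_lt a b : a != b -> (2^-1 * (a + b)) ^+ 2 < 2^-1 * (a ^+ 2 + b ^+ 2).
Proof.
move=> ab; rewrite -subr_gt0.
have -> : 2^-1 * (a ^+ 2 + b ^+ 2) - (2^-1 * (a + b)) ^+ 2 = (2^-1 * (a - b)) ^+ 2.
  by field.
by rewrite lt_def sqr_ge0 andbT sqrf_eq0 mulf_neq0 ?subr_eq0 // invr_eq0 pnatr_eq0.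
Qed.

End SquareInequalities.

(* Minkowski's inequality without Cauchy-Schwarz: for t = b / a the bound is
   exactly (a + b)^2. *)
Lemma sqrtr_le_add_weighted (R : rcfType) (a b r : R) : 0 < a -> 0 < b ->
  (forall t, 0 < t -> r <= (1 + t) * a ^+ 2 + (1 + t^-1) * b ^+ 2) ->
  Num.sqrt r <= a + b.
Proof.
move=> a0 b0 /(_ (b / a) (divr_gt0 b0 a0)).
have -> : (1 + b / a) * a ^+ 2 + (1 + (b / a)^-1) * b ^+ 2 = (a + b) ^+ 2.
  by field; rewrite !gt_eqF.
move=> le_r; rewrite -(ger0_norm (ltW (addr_gt0 a0 b0))) -sqrtr_sqr.
by rewrite ler_sqrt ?sqr_ge0.
Qed.

Section NormedSquares.
Variables (R : realType) (W : normedModType R).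
Implicit Types z : W.

Lemma sqr_normrD_le_weighted z1 z2 (t : R) : 0 < t ->
  `|z1 + z2| ^+ 2 <= (1 + t) * `|z1| ^+ 2 + (1 + t^-1) * `|z2| ^+ 2.
Proof.
move=> t0; apply: le_trans (sqrrD_le_weighted _ _ t0).
by rewrite ler_pXn2r ?nnegrE ?addr_ge0 // ler_normD.
Qed.

Lemma normr_midpoint z1 z2 : `|2^-1 *: (z1 + z2)| <= 2^-1 * (`|z1| + `|z2|).
Proof. by rewrite normrZ ger0_norm // ler_wpM2l ?invr_ge0 // ler_normD. Qed.

Lemma sqr_normr_midpoint_le z1 z2 :
  `|2^-1 *: (z1 + z2)| ^+ 2 <= 2^-1 * (`|z1| ^+ 2 + `|z2| ^+ 2).
Proof.
apply: le_trans (sqr_mean_le _ _).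
by rewrite ler_pXn2r ?nnegrE ?mulr_ge0 ?addr_ge0 ?invr_ge0 // normr_midpoint.
Qed.

Lemma sqr_normr_midpoint_lt z1 z2 : strictly_convex_space W -> z1 != z2 ->
  `|2^-1 *: (z1 + z2)| ^+ 2 < 2^-1 * (`|z1| ^+ 2 + `|z2| ^+ 2).
Proof.
move=> convW /eqP z12; have [eq_n|neq_n] := eqVneq `|z1| `|z2|.
  have -> : 2^-1 * (`|z1| ^+ 2 + `|z2| ^+ 2) = `|z1| ^+ 2 by rewrite -eq_n; field.
  by rewrite ltr_pXn2r ?nnegrE //; apply: convW.
apply: le_lt_trans (sqr_mean_lt neq_n).
by rewrite ler_pXn2r ?nnegrE ?mulr_ge0 ?addr_ge0 ?invr_ge0 // normr_midpoint.
Qed.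

End NormedSquares.

Section LinearIsometricAction.
Variables (R : realType) (V : normedModType R) (G : Type).
Variables (mul : G -> G -> G) (one : G) (act : G -> V -> V).
Hypothesis act_isometric : is_linear_isometric_action mul one act.

Lemma isometric_actionZ g c v : act g (c *: v) = c *: act g v.
Proof.
have [_ _ act_lin act_iso] := act_isometric.
have act0 : act g 0 = 0 by apply/normr0_eq0; rewrite act_iso normr0.
by rewrite -[c *: v]addr0 act_lin act0 addr0.
Qed.

End LinearIsometricAction.

(* The type depends on the proofs so that the normed-space instances below are
   keyed on them. *)
Definition renormed (R : realType) (X : normedModType R) (N : X -> R)
  of is_norm N & equivalent_norm N : Type := X.

Section Renormed.
Variables (R : realType) (X : completeNormedModType R) (N : X -> R).
Hypotheses (N_norm : is_norm N) (N_equiv : equivalent_norm N).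

Local Notation XN := (renormed N_norm N_equiv).

HB.instance Definition _ := GRing.Lmodule.on XN.

Let N_eq0 (x : XN) : N x = 0 -> x = 0.
Proof. by have [N0 _ _] := N_norm; apply: N0. Qed.

Let NZ a (x : XN) : N (a *: x) = `|a| * N x.
Proof. by have [_ -> _] := N_norm. Qed.

Let ND (x y : XN) : N (x + y) <= N x + N y.
Proof. by have [_ _ ->] := N_norm. Qed.

HB.instance Definition _ := Lmodule_isNormed.Build R XN ND NZ N_eq0.

Let renormed_complete (F : set_system XN) : ProperFilter F -> cauchy F -> cvg F.
Proof.
move=> FF /cauchyP cF; have FF' : ProperFilter (F : set_system X) := FF.
have [a [b [a0 b0 Nab]]] := N_equiv.
have /cauchy_cvg/cvg_ex[l Fl] : cauchy (F : set_system X).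
  apply: cauchy_exP => e e0; have [x Fx] := cF (a * e) (mulr_gt0 a0 e0).
  exists x; apply: filterS Fx => y /= xy.
  rewrite -ball_normE /= -(ltr_pM2l a0); exact: le_lt_trans (Nab _).1 xy.
apply: (@cvgP XN F (l : XN)); apply/fcvgrPdist_lt => e e0.
apply: filterS ((fcvgrPdist_lt l).1 Fl (e / b) (divr_gt0 e0 b0)) => y ly.
by apply: le_lt_trans (Nab _).2 _; rewrite mulrC -ltr_pdivlMr.
Qed.

HB.instance Definition _ := Uniform_isComplete.Build XN renormed_complete.

Lemma renormed_strictly_convex : strictly_convex_fun N -> strictly_convex_space XN.
Proof. by []. Qed.

Definition renormed_scale (c : R) (v : X) : XN := c *: v.

Lemma renormed_scale_linear c : linear (renormed_scale c).
Proof. by move=> a u v; rewrite /renormed_scale scalerDr scalerA mulrC -scalerA. Qed.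

HB.instance Definition _ c :=
  GRing.isLinear.Build R X XN _ (renormed_scale c) (renormed_scale_linear c).

Lemma normr_renormed_scale c v : 0 <= c -> `|renormed_scale c v| = c * N v.
Proof.
by move=> c0; have [_ NZc _] := N_norm; rewrite -[LHS]/(N (c *: v)) NZc ger0_norm.
Qed.

Lemma renormed_action (G : Type) (mul : G -> G -> G) (one : G)
    (act : G -> X -> X) :
  is_linear_isometric_action mul one act -> G_invariant act N ->
  is_linear_isometric_action mul one (act : G -> XN -> XN).
Proof. by move=> [act1 actM act_lin _] N_inv; split. Qed.

End Renormed.

Section RotundRenorming.
Variables (R : realType) (X : normedModType R) (Z : nat -> normedModType R).
Variable T : forall n, {linear X -> Z n}.
Hypothesis T_le1 : forall n v, `|T n v| <= `|v|.
Implicit Types (u v : X) (a : R).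

Definition sqr_rotund_norm v : R := `|v| ^+ 2 + wsum (fun n => `|T n v| ^+ 2).

Definition rotund_norm v : R := Num.sqrt (sqr_rotund_norm v).

Lemma nonneg_bounded_sqr_normT v : nonneg_bounded (fun n => `|T n v| ^+ 2).
Proof.
split=> [n|]; first exact: sqr_ge0.
by exists (`|v| ^+ 2) => n; rewrite ler_pXn2r ?nnegrE ?T_le1.
Qed.

Lemma sqr_rotund_norm_bounds v :
  `|v| ^+ 2 <= sqr_rotund_norm v <= 2 * `|v| ^+ 2.
Proof.
have Q0 := wsum_ge0 (nonneg_bounded_sqr_normT v).
have Qle : wsum (fun n => `|T n v| ^+ 2) <= `|v| ^+ 2.
  by apply: wsum_le_bound => n; rewrite sqr_ge0 ler_pXn2r ?nnegrE ?T_le1.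
by apply/andP; split; rewrite /sqr_rotund_norm; lra.
Qed.

Lemma rotund_normK v : rotund_norm v ^+ 2 = sqr_rotund_norm v.
Proof.
rewrite sqr_sqrtr //; case/andP: (sqr_rotund_norm_bounds v) => le_v _.
exact: le_trans (sqr_ge0 _) le_v.
Qed.

Lemma rotund_norm_eq0 v : rotund_norm v = 0 -> v = 0.
Proof.
move=> /eqP; rewrite sqrtr_eq0 => le_v0; apply/normr0_eq0/eqP.
rewrite -sqrf_eq0 eq_le sqr_ge0 andbT.
by case/andP: (sqr_rotund_norm_bounds v) => le_v _; exact: le_trans le_v le_v0.
Qed.

Lemma rotund_normZ a v : rotund_norm (a *: v) = `|a| * rotund_norm v.
Proof.
have sqr_normZ (W : normedModType R) (w : W) : `|a *: w| ^+ 2 = a ^+ 2 * `|w| ^+ 2.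
  by rewrite normrZ exprMn real_normK ?num_real.
rewrite /rotund_norm /sqr_rotund_norm sqr_normZ.
under eq_fun do rewrite linearZ sqr_normZ.
rewrite (wsumZ (sqr_ge0 a) (nonneg_bounded_sqr_normT v)) -mulrDr.
by rewrite sqrtrM ?sqr_ge0 // sqrtr_sqr.
Qed.

Lemma sqr_rotund_normD_le_weighted u v t : 0 < t ->
  sqr_rotund_norm (u + v) <=
    (1 + t) * sqr_rotund_norm u + (1 + t^-1) * sqr_rotund_norm v.
Proof.
move=> t0; have t1 : 0 <= 1 + t by rewrite addr_ge0 ?ltW.
have t2 : 0 <= 1 + t^-1 by rewrite addr_ge0 ?invr_ge0 ?ltW.
have bu := nonneg_bounded_sqr_normT u; have bv := nonneg_bounded_sqr_normT v.
have btu := nonneg_boundedZ t1 bu; have btv := nonneg_boundedZ t2 bv.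
rewrite /sqr_rotund_norm !mulrDr addrACA lerD ?sqr_normrD_le_weighted //.
rewrite -(wsumZ t1 bu) -(wsumZ t2 bv) -(wsumD btu btv).
apply: ler_wsum (nonneg_boundedD btu btv) => n.
by rewrite sqr_ge0 linearD sqr_normrD_le_weighted.
Qed.

Lemma rotund_normD u v : rotund_norm (u + v) <= rotund_norm u + rotund_norm v.
Proof.
have rotund_norm0 : rotund_norm 0 = 0.
  by rewrite -(scale0r (0 : X)) rotund_normZ normr0 mul0r.
have [->|u0] := eqVneq u 0; first by rewrite add0r rotund_norm0 add0r.
have [->|v0] := eqVneq v 0; first by rewrite addr0 rotund_norm0 addr0.
have gt0 w : w != 0 -> 0 < rotund_norm w.
  move=> w0; rewrite lt_def sqrtr_ge0 andbT.
  by apply: contra_neq w0 => /rotund_norm_eq0.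
apply: sqrtr_le_add_weighted; rewrite ?gt0 // => t t0.
by rewrite !rotund_normK sqr_rotund_normD_le_weighted.
Qed.

Lemma rotund_norm_is_norm : is_norm rotund_norm.
Proof.
by split; [exact: rotund_norm_eq0 | exact: rotund_normZ | exact: rotund_normD].
Qed.

Lemma rotund_norm_equivalent : equivalent_norm rotund_norm.
Proof.
exists 1, 2; split=> // v; rewrite mul1r.
have n0 := sqrtr_ge0 (sqr_rotund_norm v).
have /andP[lb ub] := sqr_rotund_norm_bounds v.
split; rewrite -(ler_pXn2r (_ : 0 < 2)%N) ?nnegrE ?mulr_ge0 // rotund_normK //.
by apply: le_trans ub _; rewrite exprMn ler_wpM2r ?sqr_ge0 // expr2 ler_peMl ?ler1n.
Qed.

Section Invariance.
Variables (G : Type) (mul : G -> G -> G) (one : G) (act : G -> X -> X).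
Variable actZ : forall n, G -> Z n -> Z n.
Arguments actZ : clear implicits.
Hypothesis act_isometric : is_linear_isometric_action mul one act.
Hypothesis actZ_isometric : forall n, is_linear_isometric_action mul one (actZ n).
Hypothesis T_equivariant : forall n g v, T n (act g v) = actZ n g (T n v).

Lemma rotund_norm_invariant : G_invariant act rotund_norm.
Proof.
move=> g v; rewrite /rotund_norm /sqr_rotund_norm; have [_ _ _ ->] := act_isometric.
congr (Num.sqrt (_ + wsum _)); apply/funext => n.
by rewrite T_equivariant; case: (actZ_isometric n) => _ _ _ ->.
Qed.

End Invariance.

Section StrictConvexity.
Variables (x : nat -> X) (C : R).
Hypothesis x_dense : dense (range x).
Hypothesis C_gt0 : 0 < C.
Hypothesis Z_convex : forall n, strictly_convex_space (Z n).
Hypothesis T_lower : forall n, C * `|x n| <= `|T n (x n)|.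

Lemma T_separates d : d != 0 -> exists n, T n d != 0.
Proof.
move=> d0; apply: contrapT => /forallNP Td0.
have Td n : T n d = 0 by apply/eqP/negPn/negP/Td0.
set e := C * `|d| / (C + 1).
have e0 : 0 < e by rewrite divr_gt0 ?mulr_gt0 ?normr_gt0 ?addr_gt0.
have [z [xn_d [n _ xnE]]] : ball d e `&` range x !=set0.
  by apply: x_dense; [exists d; exact: ballxx | exact: ball_open].
rewrite -xnE -ball_normE /ball_ /= in xn_d.
have le_xn : C * `|x n| <= `|d - x n|.
  rewrite distrC; apply: le_trans (T_lower n) _.
  by rewrite -[T n (x n)]subr0 -(Td n) -linearB T_le1.
have le_d : `|d| <= `|d - x n| + `|x n| by rewrite -[X in `|X|](subrK (x n)) ler_normD.
have ltC : (C + 1) * `|d - x n| < (C + 1) * e by rewrite ltr_pM2l ?addr_gt0.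
have eC : (C + 1) * e = C * `|d| by rewrite mulrC divfK ?gt_eqF ?addr_gt0.
have := ler_wpM2l (ltW C_gt0) le_d; lra.
Qed.

Lemma rotund_norm_strictly_convex : strictly_convex_fun rotund_norm.
Proof.
move=> u v /eqP uv eq_uv; set m := 2^-1 *: (u + v).
have Tm n : T n m = 2^-1 *: (T n u + T n v) by rewrite linearZ linearD.
have [k] : exists k, T k (u - v) != 0 by apply: T_separates; rewrite subr_eq0.
rewrite linearB subr_eq0 => Tk.
have bu := nonneg_bounded_sqr_normT u; have bv := nonneg_bounded_sqr_normT v.
have h0 : (0 : R) <= 2^-1 by rewrite invr_ge0.
have b_avg := nonneg_boundedZ h0 (nonneg_boundedD bu bv).
have lt_m : sqr_rotund_norm m < 2^-1 * (sqr_rotund_norm u + sqr_rotund_norm v).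
  have -> : 2^-1 * (sqr_rotund_norm u + sqr_rotund_norm v) =
      2^-1 * (`|u| ^+ 2 + `|v| ^+ 2) +
      wsum (fun n => 2^-1 * (`|T n u| ^+ 2 + `|T n v| ^+ 2)).
    rewrite (wsumZ h0 (nonneg_boundedD bu bv)) (wsumD bu bv).
    by rewrite /sqr_rotund_norm; ring.
  apply: ler_ltD (sqr_normr_midpoint_le u v) (ltr_wsum (k := k) _ _ b_avg).
    by move=> n; rewrite Tm sqr_ge0 sqr_normr_midpoint_le.
  by rewrite Tm; exact: sqr_normr_midpoint_lt (@Z_convex k) Tk.
rewrite -(ltr_pXn2r (_ : 0 < 2)%N) ?nnegrE ?sqrtr_ge0 //= !rotund_normK.
by apply: (lt_le_trans lt_m); rewrite -!rotund_normK eq_uv; lra.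
Qed.

End StrictConvexity.

End RotundRenorming.

Theorem proposition3p3 (R : realType) (X : completeNormedModType R)
  (G : topologicalType) (mul : G -> G -> G) (one : G) (inv : G -> G)
  (act : G -> X -> X) :
  separable X ->
  is_topological_group mul one inv ->
  is_linear_isometric_action mul one act ->
  continuous_action act ->
  (exists N : X -> R,
      [/\ is_norm N, equivalent_norm N, G_invariant act N & strictly_convex_fun N])
  <->
  (exists (x : nat -> X) (C : R) (Z : nat -> completeNormedModType R)
          (actZ : forall n, G -> Z n -> Z n)
          (T : forall n, {linear X -> Z n}),
      [/\ dense (range x), 0 < C &
       forall n,
         [/\ strictly_convex_space (Z n),
             is_linear_isometric_action mul one (actZ n),
             (forall g v, T n (act g v) = actZ n g (T n v)),
             (forall v, `|T n v| <= `|v|) &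
             C * `|x n| <= `|T n (x n)|]]).
Proof.
move=> [u u_dense] _ act_iso _; split.
- move=> [N [N_norm N_equiv N_inv N_convex]].
  have [a [b [a0 b0 Nab]]] := N_equiv.
  exists u, (a / b), (fun=> renormed N_norm N_equiv), (fun=> act),
    (fun=> renormed_scale N_norm N_equiv b^-1).
  split=> [//||n]; first exact: divr_gt0.
  have b'0 : 0 <= b^-1 by rewrite invr_ge0 ltW.
  split=> [||g v|v|].
  + exact: renormed_strictly_convex.
  + exact: renormed_action act_iso N_inv.
  + by rewrite /= /renormed_scale (isometric_actionZ act_iso).
  + by rewrite normr_renormed_scale // mulrC ler_pdivrMr // mulrC (Nab v).2.
  + by rewrite normr_renormed_scale // mulrAC mulrC ler_wpM2l // (Nab _).1.
- move=> [x [C [Z [actZ [T [x_dense C_gt0 /all_and5[]]]]]]].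
  move=> Z_convex actZ_iso T_equiv T_le1 T_lower.
  exists (rotund_norm T); split.
  + exact: rotund_norm_is_norm.
  + exact: rotund_norm_equivalent.
  + exact: rotund_norm_invariant act_iso actZ_iso T_equiv.
  + exact: rotund_norm_strictly_convex x_dense C_gt0 Z_convex T_lower.
Qed.
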